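(* Every object $(X,E)$ of $\mathsf{StoneE}^\mathsf{R}$ is isomorphic in $\mathsf{StoneE}^\mathsf{R}$ to the Gleason space $\mathcal G(X/E)$. Consequently the functor $\mathcal G\colon\mathsf{KHaus}^\mathsf{R}\to\mathsf{Gle}^\mathsf{R}$ is a quasi-inverse of $\mathcal Q\colon\mathsf{Gle}^\mathsf{R}\to\mathsf{KHaus}^\mathsf{R}$ (natural isomorphisms $\mathrm{id}_{\mathsf{Gle}^\mathsf{R}}\cong\mathcal G\circ\mathcal Q$ and $\mathrm{id}_{\mathsf{KHaus}^\mathsf{R}}\cong\mathcal Q\circ\mathcal G$), and the inclusion of $\mathsf{Gle}^\mathsf{R}$ into $\mathsf{StoneE}^\mathsf{R}$ is an equivalence of allegories.
   Context: $\mathsf{KHaus}^\mathsf{R}$: compact Hausdorff spaces and closed relations, relational composition, ordered by inclusion, dagger converse. $\mathsf{StoneE}^\mathsf{R}$: objects $(X,E)$ with $X$ a Stone space and $E$ a closed equivalence relation on $X$; morphisms $(X,E)\to(X',E')$ closed relations $R\subseteq X\times X'$ with $R\circ E=R=E'\circ R$; identity $E$; relational composition; ordered by inclusion; dagger converse. A Gleason space is an object $(X,E)$ of $\mathsf{StoneE}^\mathsf{R}$ with $X$ extremally disconnected and $E$ irreducible (for every proper closed $F\subsetneq X$, $E[F]\neq X$); $\mathsf{Gle}^\mathsf{R}$ is the full subcategory on Gleason spaces. $\mathcal Q$ sends $(X,E)$ to $X/E$ and $R$ to $\pi'\circ R\circ\breve\pi$ with $\pi,\pi'$ the quotient maps.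 For a compact Hausdorff space $X$, $g_X\colon\widehat X\to X$ denotes its Gleason cover (the extremally disconnected compact Hausdorff space $\widehat X$ with the irreducible continuous surjection $g_X$). $\mathcal G(X)=(\widehat X,E_X)$ where $x\mathrel{E_X}y\iff g_X(x)=g_X(y)$, and for a closed relation $R\colon X\to X'$, $\mathcal G(R)=\breve g_{X'}\circ R\circ g_X$, i.e.\ $x\mathrel{\mathcal G(R)}x'\iff g_X(x)\mathrel{R}g_{X'}(x')$. An equivalence of allegories is an equivalence of categories preserving binary meets of morphisms and daggers. *)

From HB Require Import structures.
From mathcomp Require Import all_boot all_order all_algebra.
From mathcomp Require Import all_classical.
From mathcomp Require Import topology quotient_topology generic_quotient.

Set Implicit Arguments.
Unset Strict Implicit.
Unset Printing Implicit Defensive.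

Local Open Scope classical_set_scope.
Local Open Scope quotient_scope.

Definition hrel (X Y : Type) := X -> Y -> Prop.

(** relational composition, written as in the paper: [rcomp S R] is [S ∘ R],
    i.e. first [R], then [S]. *)
Definition rcomp {X Y Z : Type} (S : hrel Y Z) (R : hrel X Y) : hrel X Z :=
  fun x z => exists y, R x y /\ S y z.

Definition rconv {X Y : Type} (R : hrel X Y) : hrel Y X := fun y x => R x y.

Definition rgraph {X Y : Type} (f : X -> Y) : hrel X Y := fun x y => f x = y.

Definition rdiag (X : Type) : hrel X X := fun x y => x = y.

Definition releq {X Y : Type} (R S : hrel X Y) := forall x y, R x y <-> S x y.

Definition rimage {X Y : Type} (R : hrel X Y) (F : set X) : set Y :=
  [set y | exists2 x, F x & R x y].

Definition equivalence_rel {X : Type} (E : hrel X X) :=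
  [/\ forall x, E x x, forall x y, E x y -> E y x &
      forall x y z, E x y -> E y z -> E x z].

Definition closed_rel {X Y : topologicalType} (R : hrel X Y) :=
  closed [set p : X * Y | R p.1 p.2].

Definition compact_hausdorff (X : topologicalType) :=
  compact [set: X] /\ hausdorff_space X.

Definition stone_space (X : topologicalType) :=
  compact_hausdorff X /\ totally_disconnected [set: X].

Definition extremally_disconnected (X : topologicalType) :=
  forall U : set X, open U -> open (closure U).

Definition StoneE_obj {X : topologicalType} (E : hrel X X) :=
  [/\ stone_space X, closed_rel E & equivalence_rel E].

Definition StoneE_hom {X Y : topologicalType} (E : hrel X X) (E' : hrel Y Y)
  (R : hrel X Y) :=
  [/\ closed_rel R, releq (rcomp R E) R & releq (rcomp E' R) R].

(** isomorphism (X,E) -> (Y,E') in StoneE^R (the identity of (X,E) is E) *)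
Definition StoneE_iso {X Y : topologicalType} (E : hrel X X) (E' : hrel Y Y)
  (R : hrel X Y) :=
  StoneE_hom E E' R /\
  exists S : hrel Y X,
    [/\ StoneE_hom E' E S, releq (rcomp S R) E & releq (rcomp R S) E'].

Definition irreducible_rel {X : topologicalType} (E : hrel X X) :=
  forall F : set X, closed F -> F <> setT -> rimage E F <> setT.

Definition Gleason_space {X : topologicalType} (E : hrel X X) :=
  [/\ StoneE_obj E, extremally_disconnected X & irreducible_rel E].

Definition KHaus_iso {X Y : topologicalType} (R : hrel X Y) :=
  closed_rel R /\
  exists S : hrel Y X,
    [/\ closed_rel S, releq (rcomp S R) (@rdiag X) & releq (rcomp R S) (@rdiag Y)].

(** we quotient by "having the same E-class", which coincides with E
    whenever E is an equivalence relation (and is always an equivalence,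
    so that the quotient construction is total). *)
Definition class_rel {X : Type} (E : hrel X X) : rel X :=
  fun x y => `[< forall z, E x z <-> E y z >].

Lemma class_rel_refl {X : Type} (E : hrel X X) : reflexive (class_rel E).
Proof. by move=> x; apply/asboolP. Qed.

Lemma class_rel_sym {X : Type} (E : hrel X X) : symmetric (class_rel E).
Proof.
move=> x y; apply/asboolP/asboolP => H z; by split => /H.
Qed.

Lemma class_rel_trans {X : Type} (E : hrel X X) : transitive (class_rel E).
Proof.
move=> y x z /asboolP Hxy /asboolP Hyz; apply/asboolP => w.
by split => [/Hxy/Hyz|/Hyz/Hxy].
Qed.

Definition class_equiv {X : choiceType} (E : hrel X X) : equiv_rel X :=
  EquivRel (class_rel E) (@class_rel_refl _ E) (@class_rel_sym _ E) (@class_rel_trans _ E).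

Definition quot {X : topologicalType} (E : hrel X X) : topologicalType :=
  quotient_topology {eq_quot (class_equiv E)}.

Definition qproj {X : topologicalType} (E : hrel X X) : X -> quot E :=
  \pi_({eq_quot (class_equiv E)})%qT.

Definition Qrel {X X' : topologicalType} (E : hrel X X) (E' : hrel X' X')
  (R : hrel X X') : hrel (quot E) (quot E') :=
  rcomp (rgraph (qproj E')) (rcomp R (rconv (rgraph (qproj E)))).

Definition irreducible_map {Y X : topologicalType} (g : Y -> X) :=
  forall F : set Y, closed F -> F <> setT -> g @` F <> setT.

Definition gleason_cover {Y X : topologicalType} (g : Y -> X) :=
  [/\ compact_hausdorff Y, extremally_disconnected Y, continuous g,
      (forall x, exists y, g y = x) & irreducible_map g].

(** a (not yet certified) choice of a space over X *)
Record precover (X : topologicalType) := Precover {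
  pc_space : topologicalType;
  pc_map : pc_space -> X }.

Definition Gsp (cv : forall K : topologicalType, precover K) (K : topologicalType)
  : topologicalType := pc_space (cv K).

Definition Gmap (cv : forall K : topologicalType, precover K) (K : topologicalType)
  : Gsp cv K -> K := @pc_map K (cv K).
Arguments Gmap : clear implicits.

Definition GE (cv : forall K : topologicalType, precover K) (K : topologicalType)
  : hrel (Gsp cv K) (Gsp cv K) :=
  fun y y' => Gmap cv K y = Gmap cv K y'.

Definition Grel (cv : forall K : topologicalType, precover K) {K K' : topologicalType}
  (R : hrel K K') : hrel (Gsp cv K) (Gsp cv K') :=
  rcomp (rconv (rgraph (Gmap cv K'))) (rcomp R (rgraph (Gmap cv K))).

Arguments GE : clear implicits.
Arguments Grel cv {K K'} R.
Arguments Qrel {X X'} E E' R.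
Arguments qproj {X} E.

(** An object (X, E) and the Gleason space G(X/E) both sit over the compact
    Hausdorff space X/E, via the quotient map and the Gleason cover, and in
    both cases the equivalence relation is the kernel of that map. For any
    two continuous surjections onto a common Hausdorff space, the pullback
    relation {(x, y) | p x = g y} is closed and, together with its converse,
    composes to the two kernels; so it is an isomorphism of StoneE^R.
    Naturality of these isomorphisms is element chasing, and the only real
    topology is that X/E is compact Hausdorff when E is a closed equivalence
    on a compact Hausdorff space. *)

From Pilot Require Import Defs.
From HB Require Import structures.
From mathcomp Require Import all_boot all_order all_algebra.
From mathcomp Require Import all_classical.
From mathcomp Require Import topology quotient_topology generic_quotient.

Local Open Scope classical_set_scope.

Definition pullback_rel {X Y Z : Type} (p : X -> Z) (g : Y -> Z) : hrel X Y :=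
  fun x y => p x = g y.

Definition rpreimage {X X' Y Y' : Type} (g : Y -> X) (g' : Y' -> X')
  (R : hrel X X') : hrel Y Y' :=
  rcomp (rconv (Defs.rgraph g')) (rcomp R (Defs.rgraph g)).

Definition rdirimage {X X' Z Z' : Type} (p : X -> Z) (p' : X' -> Z')
  (R : hrel X X') : hrel Z Z' :=
  rcomp (Defs.rgraph p') (rcomp R (rconv (Defs.rgraph p))).

Lemma equivalence_rel_kernel {X Z : Type} {E : hrel X X} {f : X -> Z} :
  releq E (pullback_rel f f) -> Defs.equivalence_rel E.
Proof.
move=> kerE; split=> [x|x y /kerE xy|x y z /kerE xy /kerE yz]; apply/kerE => //.
exact: etrans xy yz.
Qed.

Lemma closed_pullback_rel {X Y Z : topologicalType} {p : X -> Z} {g : Y -> Z} :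
  hausdorff_space Z -> continuous p -> continuous g ->
  closed_rel (pullback_rel p g).
Proof.
move=> hZ cp cg; rewrite /closed_rel closedE => -[x y] /= clxy.
apply: contrapT => /eqP neq; apply: clxy.
move: hZ; rewrite open_hausdorff => /(_ _ _ neq) [[U V]] /=.
rewrite !inE => -[pU gV] [oU oV UV0].
exists (p @^-1` U, g @^-1` V) => /=.
  by split; [apply: cp|apply: cg]; exact: open_nbhs_nbhs.
move=> [x' y'] /= [Ux' Vy'] e.
have : (U `&` V) (p x') by split => //; rewrite e.
by rewrite UV0.
Qed.

(** The image of a closed set under a closed relation is closed: a point
    adherent to R[F] gives a filter on the compact set F whose cluster point
    is a preimage, by closedness of R. *)
Lemma rimage_closed (X Y : topologicalType) (R : hrel X Y) (F : set X) :
  compact [set: X] -> closed_rel R -> closed F -> closed (rimage R F).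
Proof.
move=> cX cR cF; rewrite closedE => y Hy.
have cptF : compact F by exact: (subclosed_compact cF cX).
pose S (V : set Y) := [set x | F x /\ exists2 y', V y' & R x y'].
have S_neq0 V : nbhs y V -> S V !=set0.
  move=> Vy; apply: contrapT => /set0P/negP; rewrite negbK => /eqP S0.
  apply: Hy; apply: filterS Vy => y' Vy' [x Fx Rxy'].
  have : S V x by split => //; exists y'.
  by rewrite S0.
have FS : Filter (filter_from (nbhs y) S).
  apply: filter_from_filter; first by exists setT; exact: filterT.
  move=> V V' nV nV'; exists (V `&` V'); first exact: filterI.
  by move=> x [Fx [y' [Vy' V'y'] Rxy']]; split; split => //; exists y'.
have PF := filter_from_proper FS S_neq0.
have SF : filter_from (nbhs y) S F by exists setT; [exact: filterT|move=> x []].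
have [x [Fx clx]] := cptF _ PF SF.
exists x => //; move: cR; rewrite /closed_rel closedE => /(_ (x, y)); apply.
case=> -[U V] /= [Ux Vy] UV.
have SV : filter_from (nbhs y) S (S V) by exists V.
have [x' [[Fx' [y' Vy' Rxy']] Ux']] := clx (S V) U SV Ux.
exact: (UV (x', y')).
Qed.

Lemma normal_separation {X : topologicalType} {A B : set X} :
  normal_space X -> closed A -> closed B -> A `&` B = set0 ->
  exists U V : set X,
    [/\ open U, open V, A `<=` U, B `<=` V & U `&` V = set0].
Proof.
move=> nX cA cB AB0.
have snB : set_nbhs A (~` B).
  apply/set_nbhsP; exists (~` B); split => //; first exact: closed_openC.
  by move=> z Az Bz; have : (A `&` B) z by []; rewrite AB0.
have [W /set_nbhsP [U [oU AU UW]] clWB] := nX A cA _ snB.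
exists U, (~` closure U); split => //.
- exact/closed_openC/closed_closure.
- by move=> z Bz /(closureS UW) /clWB.
- by apply/seteqP; split => // z [/subset_closure].
Qed.

Section Quotient.
Context {X : topologicalType} {E : hrel X X}.

Lemma qproj_surj (q : quot E) : exists x, qproj E x = q.
Proof. by exists (repr q); rewrite /qproj reprK. Qed.

Lemma qproj_continuous : continuous (qproj E).
Proof. exact: pi_continuous. Qed.

Hypothesis eqE : Defs.equivalence_rel E.

Lemma qproj_eqP x y : qproj E x = qproj E y <-> E x y.
Proof.
have [Er Es Et] := eqE; split.
  by move/eqquotP => /asboolP /(_ y) [_]; apply; exact: Er.
move=> Exy; apply/eqquotP/asboolP => z.
by split=> [/(Et _ _ _ (Es _ _ Exy))|/(Et _ _ _ Exy)].
Qed.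

Lemma kernel_qproj : releq E (pullback_rel (qproj E) (qproj E)).
Proof. by move=> x y; split=> /qproj_eqP. Qed.

(** [saturation U] is the largest E-saturated subset of U. *)
Definition saturation (U : set X) : set X := ~` rimage E (~` U).

Lemma saturation_sub U : saturation U `<=` U.
Proof.
move=> z sz; apply: contrapT => nUz; apply: sz; exists z => //.
by have [Er _ _] := eqE.
Qed.

Lemma saturationP U x : (forall z, E x z -> U z) -> saturation U x.
Proof. by have [_ Es _] := eqE => H [w nUw Ewx]; apply/nUw/H/Es. Qed.

Lemma saturation_stable {U z z'} : E z z' -> saturation U z -> saturation U z'.
Proof.
have [_ Es Et] := eqE => Ezz' sz [w nUw Ewz']; apply: sz.
by exists w => //; exact: Et Ewz' (Es _ _ Ezz').
Qed.

Lemma open_qproj_saturation U : compact [set: X] -> closed_rel E ->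
  open U -> open (qproj E @` saturation U).
Proof.
move=> cX cE oU.
change (open (qproj E @^-1` (qproj E @` saturation U))).
have -> : qproj E @^-1` (qproj E @` saturation U) = saturation U.
  apply/seteqP; split=> x /=; last by exists x.
  by case=> z sz /qproj_eqP Ezx; exact: saturation_stable Ezx sz.
by apply/closed_openC/rimage_closed => //; exact: open_closedC.
Qed.

Lemma quot_hausdorff : compact_hausdorff X -> closed_rel E ->
  hausdorff_space (quot E).
Proof.
move=> [cX hX] cE; have [_ Es Et] := eqE.
rewrite open_hausdorff => q1 q2.
have [x1 <-] := qproj_surj q1; have [x2 <-] := qproj_surj q2.
move=> /eqP /qproj_eqP nE12.
have cl1 (x : X) : closed [set x].
  exact/accessible_closed_set1/hausdorff_accessible.
have cls x : closed (rimage E [set x]) by exact: rimage_closed.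
have disj : rimage E [set x1] `&` rimage E [set x2] = set0.
  apply/seteqP; split => // z [[_ -> e1] [_ -> e2]].
  by apply: nE12; exact: Et e1 (Es _ _ e2).
have [U [V [oU oV sU sV UV0]]] :=
  normal_separation (compact_normal hX cX) (cls x1) (cls x2) disj.
exists (qproj E @` saturation U, qproj E @` saturation V) => /=.
  rewrite !inE; split.
    by exists x1 => //; apply: saturationP => z e; apply: sU; exists x1.
  by exists x2 => //; apply: saturationP => z e; apply: sV; exists x2.
split; [exact: open_qproj_saturation|exact: open_qproj_saturation|].
apply/eqP/seteqP; split => // _ [[z sz <-] [z' sz' /qproj_eqP e]].
have : (U `&` V) z.
  by split; apply: saturation_sub; [exact: sz|exact: saturation_stable e sz'].
by rewrite UV0.
Qed.

Lemma quot_compact : compact [set: X] -> compact [set: quot E].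
Proof.
move=> cX.
have := continuous_compact (continuous_subspaceT qproj_continuous) cX.
congr compact; apply/seteqP; split => // q _.
by have [x <-] := qproj_surj q; exists x.
Qed.

Lemma compact_hausdorff_quot :
  compact_hausdorff X -> closed_rel E -> compact_hausdorff (quot E).
Proof.
by move=> chX cE; split; [exact: quot_compact chX.1|exact: quot_hausdorff].
Qed.

End Quotient.

Lemma compact_hausdorff_quot_obj {X : topologicalType} {E : hrel X X} :
  StoneE_obj E -> compact_hausdorff (quot E).
Proof. by case=> -[chX _] cE eqE; exact: compact_hausdorff_quot. Qed.

(** [g \o repr] is the map Y/E -> Z induced by [g], whose kernel is E. *)
Section KernelQuotient.
Context {Y Z : topologicalType} {E : hrel Y Y} {g : Y -> Z}.
Hypothesis kerE : releq E (pullback_rel g g).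

Let eqE : Defs.equivalence_rel E := equivalence_rel_kernel kerE.

Lemma repr_qproj_kernel y : g (repr (qproj E y)) = g y.
Proof. by apply/kerE/(qproj_eqP eqE); rewrite /qproj reprK. Qed.

Lemma injective_kernel_lift : injective (g \o repr : quot E -> Z).
Proof.
move=> q q' /= /kerE /(qproj_eqP eqE).
by rewrite /qproj !reprK.
Qed.

Lemma continuous_kernel_lift :
  continuous g -> continuous (g \o repr : quot E -> Z).
Proof.
move=> cg; apply: (repr_comp_continuous cg) => a b /eqP /(qproj_eqP eqE) /kerE.
by move->.
Qed.

End KernelQuotient.

Lemma extremally_disconnected_totally_disconnected (Y : topologicalType) :
  hausdorff_space Y -> extremally_disconnected Y ->
  totally_disconnected [set: Y].
Proof.
move=> hY eY; apply: zero_dimension_totally_disconnected => x y nxy.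
move: hY; rewrite open_hausdorff => /(_ _ _ nxy) [[U V]] /=.
rewrite !inE => -[Ux Vy] [oU oV UV0].
exists (closure U); split; [split; [exact: eY|exact: closed_closure]| |].
  exact: subset_closure.
move=> /(_ V (open_nbhs_nbhs (conj oV Vy))) [z UVz].
by move: UV0 UVz => ->.
Qed.

Lemma Gleason_space_kernel {Y K : topologicalType} (g : Y -> K) :
  gleason_cover g -> compact_hausdorff K -> Gleason_space (pullback_rel g g).
Proof.
move=> [chY eY cg sg ig] chK; split => //.
  split; last exact: (equivalence_rel_kernel (f := g)).
    split => //; apply: extremally_disconnected_totally_disconnected => //.
    exact: chY.2.
  exact: (closed_pullback_rel chK.2 cg cg).
move=> F cF nF EF; apply: (ig F cF nF).
apply/seteqP; split => // k _; have [y <-] := sg k.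
have : rimage (pullback_rel g g) F y by rewrite EF.
by case=> x Fx e; exists x.
Qed.

Section PullbackHom.
Variables (X Y Z : topologicalType) (E : hrel X X) (F : hrel Y Y).
Variables (p : X -> Z) (g : Y -> Z).
Hypotheses (hZ : hausdorff_space Z) (cp : continuous p) (cg : continuous g).
Hypotheses (kerE : releq E (pullback_rel p p))
           (kerF : releq F (pullback_rel g g)).

Lemma StoneE_hom_pullback : StoneE_hom E F (pullback_rel p g).
Proof.
split; first exact: closed_pullback_rel.
- move=> x y; split; first by case=> x' [/kerE e]; rewrite /pullback_rel e.
  by move=> e; exists x; split => //; apply/kerE.
- move=> x y; split; first by case=> y' [e /kerF]; rewrite /pullback_rel e.
  by move=> e; exists y; split => //; apply/kerF.
Qed.

End PullbackHom.

Lemma StoneE_iso_pullback (X Y Z : topologicalType) (E : hrel X X)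
  (F : hrel Y Y) (p : X -> Z) (g : Y -> Z) :
  hausdorff_space Z -> continuous p -> continuous g ->
  releq E (pullback_rel p p) -> releq F (pullback_rel g g) ->
  (forall z, exists x, p x = z) -> (forall z, exists y, g y = z) ->
  StoneE_iso E F (pullback_rel p g).
Proof.
move=> hZ cp cg kerE kerF sp sg; split; first exact: StoneE_hom_pullback.
exists (pullback_rel g p); split; first exact: StoneE_hom_pullback.
- move=> x x'; rewrite kerE; split.
    by case=> y [e1 e2]; exact: etrans e1 e2.
  by move=> e; have [y gy] := sg (p x); exists y; rewrite /pullback_rel gy.
- move=> y y'; rewrite kerF; split.
    by case=> x [e1 e2]; exact: etrans e1 e2.
  by move=> e; have [x px] := sp (g y); exists x; rewrite /pullback_rel px.
Qed.

Lemma KHaus_iso_StoneE_iso (X Y : topologicalType) (R : hrel X Y) :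
  StoneE_iso (@rdiag X) (@rdiag Y) R -> KHaus_iso R.
Proof. by case=> -[cR _ _] [S [[cS _ _] SR RS]]; split => //; exists S. Qed.

Lemma pullback_rel_natural_quot {X X' Y Y' Z Z' : Type} {E : hrel X X}
  {p : X -> Z} {p' : X' -> Z'} {g : Y -> Z} {g' : Y' -> Z'} {R : hrel X X'} :
  releq E (pullback_rel p p) -> (forall z, exists y, g y = z) ->
  releq (rcomp R E) R ->
  releq (rcomp (rpreimage g g' (rdirimage p p' R)) (pullback_rel p g))
        (rcomp (pullback_rel p' g') R).
Proof.
move=> kerE sg RE x y'; split.
  case=> y [pxgy [k' [[k [gyk [x2 [[x1 [px1k Rx12]] p'x2]]]] gy']]].
  exists x2; split; last by rewrite /pullback_rel p'x2 gy'.
  apply/RE; exists x1; split => //.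
  by apply/kerE; rewrite /pullback_rel pxgy gyk px1k.
case=> x2 [Rx2 e]; have [y gy] := sg (p x).
exists y; split => //; exists (p' x2); split; last by rewrite e.
by exists (g y); split => //; exists x2; split => //; exists x; split.
Qed.

Lemma pullback_rel_natural_cover {X X' Y Y' Q Q' : Type}
  {g : Y -> X} {g' : Y' -> X'} {pr : Y -> Q} {pr' : Y' -> Q'}
  {h : Q -> X} {h' : Q' -> X'} {R : hrel X X'} :
  (forall y, h (pr y) = g y) -> (forall y', h' (pr' y') = g' y') ->
  (forall x, exists y, g y = x) -> (forall q', exists y', pr' y' = q') ->
  releq (rcomp (rdirimage pr pr' (rpreimage g g' R)) (pullback_rel id h))
        (rcomp (pullback_rel id h') R).
Proof.
move=> hpr hpr' sg spr' x q'; split.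
  case=> q [/= xhq [y2 [[y1 [pry1 [k [[k0 [gy1 Rk0k]] gy2]]]] pry2]]].
  exists k; split; last by rewrite /pullback_rel -pry2 hpr' gy2.
  by rewrite xhq -pry1 hpr gy1.
case=> x' [Rxx' /= x'h]; have [y1 gy1] := sg x; have [y2 pry2] := spr' q'.
exists (pr y1); split; first by rewrite /pullback_rel hpr gy1.
exists y2; split => //; exists y1; split => //.
exists x'; split; first by exists x; split.
by rewrite /rconv /Defs.rgraph -hpr' pry2 x'h.
Qed.

Section GleasonEquivalence.
Variable cv : forall K : topologicalType, precover K.
Hypothesis Hcv : forall K : topologicalType, compact_hausdorff K ->
  gleason_cover (@pc_map K (cv K)).

Definition iso_GQ {X : topologicalType} (E : hrel X X) :
  hrel X (Gsp cv (quot E)) :=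
  pullback_rel (qproj E) (Gmap cv (quot E)).

(** The converse graph of the homeomorphism [Gmap cv X \o repr] from X^/E_X
    to X. *)
Definition iso_QG (X : topologicalType) : hrel X (quot (GE cv X)) :=
  pullback_rel id (Gmap cv X \o repr).

Let kernel_GE (X : topologicalType) :
  releq (GE cv X) (pullback_rel (Gmap cv X) (Gmap cv X)).
Proof. by []. Qed.

Lemma Gleason_space_G (X : topologicalType) :
  compact_hausdorff X -> Gleason_space (GE cv X).
Proof. by move=> chX; exact: Gleason_space_kernel (Hcv X chX) chX. Qed.

Lemma Gleason_space_GQ (X : topologicalType) (E : hrel X X) :
  StoneE_obj E -> Gleason_space (GE cv (quot E)).
Proof.
by move=> oE; apply: Gleason_space_G; exact: compact_hausdorff_quot_obj.
Qed.

Lemma StoneE_iso_GQ (X : topologicalType) (E : hrel X X) :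
  StoneE_obj E -> StoneE_iso E (GE cv (quot E)) (iso_GQ E).
Proof.
move=> oE; have chQ := compact_hausdorff_quot_obj oE.
have [_ _ cg sg _] := Hcv _ chQ; have [_ _ eqE] := oE.
apply: StoneE_iso_pullback => //; first exact: chQ.2.
- exact: qproj_continuous.
- exact: kernel_qproj.
- exact: qproj_surj.
Qed.

Lemma iso_GQ_natural (X X' : topologicalType) (E : hrel X X) (E' : hrel X' X')
  (R : hrel X X') : StoneE_obj E -> releq (rcomp R E) R ->
  releq (rcomp (Grel cv (Qrel E E' R)) (iso_GQ E)) (rcomp (iso_GQ E') R).
Proof.
move=> oE RE; have [_ _ eqE] := oE.
have [_ _ _ sg _] := Hcv _ (compact_hausdorff_quot_obj oE).
exact: (pullback_rel_natural_quot (p' := qproj E') (g' := Gmap cv (quot E'))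
          (kernel_qproj eqE) sg RE).
Qed.

Lemma KHaus_iso_QG (X : topologicalType) :
  compact_hausdorff X -> KHaus_iso (iso_QG X).
Proof.
move=> chX; have [_ _ cg sg _] := Hcv _ chX.
apply/KHaus_iso_StoneE_iso/StoneE_iso_pullback => //; first exact: chX.2.
- by move=> x U.
- exact: continuous_kernel_lift (kernel_GE X) cg.
- by move=> q q'; split=> [->|/(injective_kernel_lift (kernel_GE X))].
- by move=> x; exists x.
- move=> x; have [y <-] := sg x.
  by exists (qproj _ y); rewrite /= (repr_qproj_kernel (kernel_GE X)).
Qed.

Lemma iso_QG_natural (X X' : topologicalType) (R : hrel X X') :
  compact_hausdorff X ->
  releq (rcomp (Qrel (GE cv X) (GE cv X') (Grel cv R)) (iso_QG X))
        (rcomp (iso_QG X') R).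
Proof.
move=> chX; have [_ _ _ sg _] := Hcv _ chX.
apply: pullback_rel_natural_cover sg (qproj_surj (E := GE cv X')).
- exact: repr_qproj_kernel (kernel_GE X).
- exact: repr_qproj_kernel (kernel_GE X').
Qed.

End GleasonEquivalence.

Theorem theorem4p6
  (cv : forall K : topologicalType, precover K)
  (Hcv : forall K : topologicalType, compact_hausdorff K ->
           gleason_cover (@pc_map K (cv K))) :
  (forall (X : topologicalType) (E : hrel X X), StoneE_obj E ->
     Gleason_space (GE cv (quot E)) /\
     exists R : hrel X (Gsp cv (quot E)), StoneE_iso E (GE cv (quot E)) R)
  /\
  (forall (X : topologicalType) (E : hrel X X), Gleason_space E ->
     compact_hausdorff (quot E))
  /\
  (exists alpha : forall (X : topologicalType) (E : hrel X X),
                    hrel X (Gsp cv (quot E)),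
     (forall (X : topologicalType) (E : hrel X X), Gleason_space E ->
        StoneE_iso E (GE cv (quot E)) (alpha X E)) /\
     (forall (X X' : topologicalType) (E : hrel X X) (E' : hrel X' X')
             (R : hrel X X'),
        Gleason_space E -> Gleason_space E' -> StoneE_hom E E' R ->
        releq (rcomp (Grel cv (Qrel E E' R)) (alpha X E))
              (rcomp (alpha X' E') R)))
  /\
  (forall X : topologicalType, compact_hausdorff X -> Gleason_space (GE cv X))
  /\
  (exists beta : forall X : topologicalType, hrel X (quot (GE cv X)),
     (forall X : topologicalType, compact_hausdorff X -> KHaus_iso (beta X)) /\
     (forall (X X' : topologicalType) (R : hrel X X'),
        compact_hausdorff X -> compact_hausdorff X' -> closed_rel R ->
        releq (rcomp (Qrel (GE cv X) (GE cv X') (Grel cv R)) (beta X))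
              (rcomp (beta X') R)))
  /\
  (forall (X : topologicalType) (E : hrel X X), StoneE_obj E ->
     exists (Y : topologicalType) (F : hrel Y Y) (R : hrel X Y),
       Gleason_space F /\ StoneE_iso E F R).
Proof.
split.
  move=> X E oE; split; first exact: Gleason_space_GQ.
  by exists (iso_GQ cv E); exact: StoneE_iso_GQ.
split; first by move=> X E [oE _ _]; exact: compact_hausdorff_quot_obj.
split.
  exists (@iso_GQ cv); split=> [X E [oE _ _]|X X' E E' R [oE _ _] _ [_ RE _]].
    exact: StoneE_iso_GQ.
  exact: iso_GQ_natural.
split; first exact: Gleason_space_G.
split.
  exists (iso_QG cv); split=> [X|X X' R chX _ _]; first exact: KHaus_iso_QG.
  exact: iso_QG_natural.
move=> X E oE; exists (Gsp cv (quot E)), (GE cv (quot E)), (iso_GQ cv E).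
by split; [exact: Gleason_space_GQ|exact: StoneE_iso_GQ].
Qed.
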